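(* Let $G$ be a group with the unique root property which is generated by the union of two subgroups $A$ and $B$, let $H$ be a finite-index subgroup of $G$, and let $\varphi:H\to H$ be an automorphism. If $\varphi\neq\mathrm{id}$ but $\varphi|_{H\cap A}=\mathrm{id}$ and $\varphi|_{H\cap B}=\mathrm{id}$, then $\varphi$ does not extend to an automorphism of $G$.
   Context: A group $G$ has the unique root property if for all $x,y\in G$ and every positive integer $n$, $x^n=y^n$ implies $x=y$. *)

From Stdlib Require Import List.

Record group := Group {
  carrier :> Type;
  gmul : carrier -> carrier -> carrier;
  ginv : carrier -> carrier;
  gone : carrier;
  gmulA : forall x y z, gmul x (gmul y z) = gmul (gmul x y) z;
  gmul1l : forall x, gmul gone x = x;
  gmulVl : forall x, gmul (ginv x) x = gone
}.

Arguments gmul {g}.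
Arguments ginv {g}.
Arguments gone {g}.

Fixpoint gpow {G : group} (x : G) (n : nat) : G :=
  match n with
  | O => gone
  | S m => gmul x (gpow x m)
  end.

Definition unique_root (G : group) : Prop :=
  forall (x y : G) (n : nat), 0 < n -> gpow x n = gpow y n -> x = y.

Definition subgroup {G : group} (H : G -> Prop) : Prop :=
  H gone /\ (forall x y, H x -> H y -> H (gmul x y)) /\ (forall x, H x -> H (ginv x)).

Definition generated_by_union {G : group} (A B : G -> Prop) : Prop :=
  forall K : G -> Prop, subgroup K ->
    (forall a, A a -> K a) -> (forall b, B b -> K b) -> forall x, K x.

(* H has finite index: finitely many left cosets g H cover G *)
Definition finite_index {G : group} (H : G -> Prop) : Prop :=
  exists reps : list G, forall x : G, exists g, In g reps /\ H (gmul (ginv g) x).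

(* phi (restricted to H) is an automorphism of the subgroup H *)
Definition is_aut_of_subgroup {G : group} (H : G -> Prop) (phi : G -> G) : Prop :=
  (forall h, H h -> H (phi h)) /\
  (forall h k, H h -> H k -> phi (gmul h k) = gmul (phi h) (phi k)) /\
  (forall h k, H h -> H k -> phi h = phi k -> h = k) /\
  (forall k, H k -> exists h, H h /\ phi h = k).

Definition is_aut {G : group} (psi : G -> G) : Prop :=
  (forall x y, psi (gmul x y) = gmul (psi x) (psi y)) /\
  (forall x y, psi x = psi y -> x = y) /\
  (forall y, exists x, psi x = y).

(* If psi is an automorphism of G extending phi, then psi fixes a power of
   every element of A: every x has a power x^n in the finite-index subgroup H
   (pigeonhole on the cosets x^i H), and psi (x^n) = phi (x^n) = x^n when
   x lies in A.  Thus (psi x)^n = x^n, so psi x = x by the unique root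
   property.  Likewise psi fixes B, hence the subgroup generated by A and B,
   which is G; so phi = psi|H is the identity. *)

From Stdlib Require Import List Lia Classical ClassicalEpsilon.

Section GroupFacts.
Variable G : group.
Implicit Types x y a : G.

Lemma mulgV x : gmul x (ginv x) = gone.
Proof.
  rewrite <- (gmul1l G (gmul x (ginv x))).
  rewrite <- (gmulVl G (ginv x)) at 1.
  rewrite <- gmulA, (gmulA _ (ginv x) x), gmulVl, gmul1l.
  apply gmulVl.
Qed.

Lemma mulg1 x : gmul x gone = x.
Proof. rewrite <- (gmulVl G x), gmulA, mulgV, gmul1l. reflexivity. Qed.

Lemma mulgI a x y : gmul a x = gmul a y -> x = y.
Proof.
  intro E.
  rewrite <- (gmul1l G x), <- (gmul1l G y), <- (gmulVl G a), <- !gmulA, E.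
  reflexivity.
Qed.

Lemma invg_unique x y : gmul y x = gone -> y = ginv x.
Proof. intro E. rewrite <- (mulg1 y), <- (mulgV x), gmulA, E, gmul1l. reflexivity. Qed.

Lemma gpowD x m n : gpow x (m + n) = gmul (gpow x m) (gpow x n).
Proof.
  induction m as [|m IHm]; simpl.
  - rewrite gmul1l. reflexivity.
  - rewrite IHm, gmulA. reflexivity.
Qed.

Lemma subgroup_gpow (S : G -> Prop) x n : subgroup S -> S x -> S (gpow x n).
Proof.
  intros [S1 [SM _]] Sx.
  induction n as [|n IHn]; simpl; auto.
Qed.

End GroupFacts.

Lemma pigeonhole_nat {T : Type} (reps : list T) (R : nat -> T -> Prop) :
  (forall i, exists t, In t reps /\ R i t) ->
  exists i j t, i < j /\ R i t /\ R j t.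
Proof.
  intros HR.
  apply choice in HR. destruct HR as [f Hf].
  apply NNPP. intros Hinj.
  assert (Hnodup : NoDup (map f (seq 0 (S (length reps))))).
  { apply NoDup_map_NoDup_ForallPairs; [|apply seq_NoDup].
    intros a b _ _ Eab.
    destruct (PeanoNat.Nat.lt_trichotomy a b) as [L|[L|L]]; auto; exfalso; apply Hinj.
    - exists a, b, (f a). split; [exact L|]. rewrite Eab at 2. split; apply Hf.
    - exists b, a, (f a). split; [exact L|]. rewrite Eab at 1. split; apply Hf. }
  assert (Hincl : incl (map f (seq 0 (S (length reps)))) reps).
  { intros t Ht. apply in_map_iff in Ht. destruct Ht as [i [<- _]]. apply Hf. }
  pose proof (NoDup_incl_length Hnodup Hincl) as Hlen.
  rewrite length_map, length_seq in Hlen. lia.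
Qed.

Lemma finite_index_gpow {G : group} (H : G -> Prop) (x : G) :
  subgroup H -> finite_index H -> exists n, 0 < n /\ H (gpow x n).
Proof.
  intros [_ [HM HI]] [reps Hreps].
  destruct (pigeonhole_nat reps (fun i g => H (gmul (ginv g) (gpow x i))))
    as [i [j [g [Hij [Hi Hj]]]]]; [intro i; apply Hreps|].
  exists (j - i). split; [lia|].
  replace j with (i + (j - i)) in Hj by lia.
  (* (g^-1 x^i)^-1 (g^-1 x^(i+d)) = x^d *)
  pose proof (HM _ _ (HI _ Hi) Hj) as Hd.
  rewrite gpowD, (gmulA _ (ginv g)), gmulA, gmulVl, gmul1l in Hd.
  exact Hd.
Qed.

Section Homomorphism.
Variables (G : group) (psi : G -> G).
Hypothesis psiM : forall x y, psi (gmul x y) = gmul (psi x) (psi y).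

Lemma hom_one : psi gone = gone.
Proof.
  symmetry. apply (mulgI G (psi gone)).
  rewrite <- psiM, mulg1, gmul1l. reflexivity.
Qed.

Lemma hom_gpow x n : psi (gpow x n) = gpow (psi x) n.
Proof.
  induction n as [|n IHn]; simpl.
  - exact hom_one.
  - rewrite psiM, IHn. reflexivity.
Qed.

Lemma hom_fixed_subgroup : subgroup (fun x => psi x = x).
Proof.
  split; [exact hom_one|split].
  - intros x y Ex Ey. rewrite psiM, Ex, Ey. reflexivity.
  - intros x Ex. rewrite <- Ex at 2. apply invg_unique.
    rewrite <- psiM, gmulVl. exact hom_one.
Qed.

Lemma hom_fixed_of_gpow_fixed x n :
  unique_root G -> 0 < n -> psi (gpow x n) = gpow x n -> psi x = x.
Proof.
  intros UR Hn Hfix.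
  apply (UR _ _ n Hn). rewrite <- hom_gpow. exact Hfix.
Qed.

End Homomorphism.

Theorem lemma3p1 (G : group) (A B H : G -> Prop) (phi : G -> G) :
  unique_root G ->
  subgroup A -> subgroup B -> generated_by_union A B ->
  subgroup H -> finite_index H ->
  is_aut_of_subgroup H phi ->
  (exists h, H h /\ phi h <> h) ->
  (forall h, H h -> A h -> phi h = h) ->
  (forall h, H h -> B h -> phi h = h) ->
  ~ (exists psi : G -> G, is_aut psi /\ forall h, H h -> psi h = phi h).
Proof.
  intros UR SA SB Gen SH FI _ [h0 [Hh0 Nh0]] FA FB [psi [[psiM _] Ext]].
  assert (Hfixed : forall S : G -> Prop, subgroup S ->
            (forall h, H h -> S h -> phi h = h) -> forall a, S a -> psi a = a).
  { intros S SS FS a Sa.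
    destruct (finite_index_gpow H a SH FI) as [n [Hn Han]].
    apply (hom_fixed_of_gpow_fixed G psi psiM a n UR Hn).
    rewrite Ext by exact Han.
    apply FS; [exact Han|exact (subgroup_gpow G S a n SS Sa)]. }
  assert (Hid : forall x, psi x = x).
  { apply Gen; [exact (hom_fixed_subgroup G psi psiM)
               |apply Hfixed; assumption|apply Hfixed; assumption]. }
  apply Nh0. rewrite <- Ext by exact Hh0. apply Hid.
Qed.
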